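(* There is an absolute constant $C>0$ such that if $H_1=(V,\mathcal{E}_1)$ and $H_2=(V,\mathcal{E}_2)$ are tri-hypergraphs on the same ground set, each of VC-dimension at most $d$ with $d\geq1$, then the intersection tri-hypergraph $H_1\cap H_2$ has VC-dimension at most $Cd$.
   Context: A tri-hypergraph is a pair $H=(V,\mathcal{E})$ where $V$ is a finite set and $\mathcal{E}$ is a collection of ordered partitions $(B,R,W)$ of $V$ into three (possibly empty) parts (tri-edges). $X\subseteq V$ is shattered if for every $Y\subseteq X$ there is a tri-edge with $X\cap B=X\cap(B\cup R)=Y$; the VC-dimension is the largest size of a shattered set. For tri-edges $e_1=(B_1,R_1,W_1)$, $e_2=(B_2,R_2,W_2)$, $e_1\cap e_2=(B,R,W)$ with $B=B_1\cap B_2$, $R=((B_1\cup R_1)\cap(B_2\cup R_2))\setminus B$ and $W=V\setminus(B\cup R)$. $H_1\cap H_2=(V,\{e_1\cap e_2:e_1\in\mathcal{E}_1,e_2\in\mathcal{E}_2\})$. *)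

From HB Require Import structures.
From mathcomp Require Import all_boot.
Set Implicit Arguments. Unset Strict Implicit. Unset Printing Implicit Defensive.

Inductive col := Bc | Rc | Wc.
Definition col_code (c : col) : 'I_3 :=
  match c with Bc => inord 0 | Rc => inord 1 | Wc => inord 2 end.
Definition col_decode (i : 'I_3) : col :=
  match val i with 0 => Bc | 1 => Rc | _ => Wc end.
Lemma col_codeK : cancel col_code col_decode.
Proof. by case; rewrite /col_decode /= inordK. Qed.
HB.instance Definition _ := Finite.copy col (can_type col_codeK).

(* A tri-edge (B,R,W) on V is encoded by the map V -> col sending x to the part
   containing it; this is exactly an ordered partition into three parts. *)
Definition triedge (V : finType) := {ffun V -> col}.
Definition Bpart (V : finType) (e : triedge V) : {set V} := [set x | e x == Bc].
Definition Rpart (V : finType) (e : triedge V) : {set V} := [set x | e x == Rc].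
Definition Wpart (V : finType) (e : triedge V) : {set V} := [set x | e x == Wc].

Definition trihyp (V : finType) := {set triedge V}.

Definition shattered (V : finType) (E : trihyp V) (X : {set V}) : bool :=
  [forall Y : {set V}, (Y \subset X) ==>
     [exists e in E, (X :&: Bpart e == Y) && (X :&: (Bpart e :|: Rpart e) == Y)]].

(* VC-dimension: the largest size of a shattered set (0 if none is shattered). *)
Definition vcdim (V : finType) (E : trihyp V) : nat :=
  \max_(X : {set V} | shattered E X) #|X|.

(* Build a tri-edge from B and R (W = V \ (B ∪ R)); B takes priority. *)
Definition mk_triedge (V : finType) (B R : {set V}) : triedge V :=
  [ffun x => if x \in B then Bc else if x \in R then Rc else Wc].

Definition triedge_cap (V : finType) (e1 e2 : triedge V) : triedge V :=
  let B := Bpart e1 :&: Bpart e2 in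
  mk_triedge B (((Bpart e1 :|: Rpart e1) :&: (Bpart e2 :|: Rpart e2)) :\: B).

Definition trihyp_cap (V : finType) (E1 E2 : trihyp V) : trihyp V :=
  [set triedge_cap e1 e2 | e1 in E1, e2 in E2].

(* If X is shattered by H1 ∩ H2, then for each of the 3^|X| pairs (B, R) of
   disjoint subsets of X there are e1 ∈ E1, e2 ∈ E2 whose intersection colours
   X as (B, R, X \ (B ∪ R)), and a set S ⊆ X on which e1 traces B with no red
   point while e2 traces R with no red point on X \ S.  By Pajor's lemma a
   hypergraph of VC-dimension at most d has at most Φ = #{Z ⊆ X : |Z| ≤ d} such
   red-free traces on a subset of X, whence 3^|X| ≤ 2^|X| Φ^2.  Together with
   Φ ≤ 15^d (16/15)^|X| this forces |X| < 25 d. *)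

From mathcomp Require Import all_boot zify.
Set Implicit Arguments. Unset Strict Implicit. Unset Printing Implicit Defensive.

Lemma leq_card_bigcup (I T : finType) (P : pred I) (F : I -> {set T}) :
  #|\bigcup_(i | P i) F i| <= \sum_(i | P i) #|F i|.
Proof.
elim/big_rec2: _ => [|i n U _ leUn]; first by rewrite cards0.
by rewrite (leq_trans (leq_card_setU _ _).1) ?leq_add2l.
Qed.

Section Pajor.
Variable V : finType.
Implicit Types (F G : {set {set V}}) (A W Z : {set V}).

Definition shatters F Z : bool :=
  [forall W : {set V}, (W \subset Z) ==> [exists A in F, A :&: Z == W]].

Definition shattered_sets F := [set Z | shatters F Z].

Lemma shattersP F Z :
  reflect (forall W, W \subset Z -> exists2 A, A \in F & A :&: Z = W) (shatters F Z).
Proof.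
apply: (iffP forallP) => [shZ W sWZ | shZ W]; last first.
  apply/implyP => /shZ[A AF AZ]; apply/existsP; exists A; by rewrite AF AZ eqxx.
by have /implyP/(_ sWZ)/existsP[A /andP[AF /eqP AZ]] := shZ W; exists A.
Qed.

Lemma shatters_subset F Z : shatters F Z -> exists2 A, A \in F & Z \subset A.
Proof. by move/shattersP/(_ Z (subxx Z)) => [A AF AZ]; exists A; rewrite // -AZ subsetIl. Qed.

Lemma shattersS F G Z : F \subset G -> shatters F Z -> shatters G Z.
Proof.
move=> sFG /shattersP shFZ; apply/shattersP => W /shFZ[A AF AZ].
by exists A; first exact: subsetP AF.
Qed.

Lemma notin_shatters_mem F Z x : {in F, forall A, x \in A} -> shatters F Z -> x \notin Z.
Proof.
move=> xF /shattersP/(_ set0 (sub0set Z)) [A AF AZ].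
by apply/negP => xZ; move/setP/(_ x): AZ; rewrite !inE xF // xZ.
Qed.

Lemma notin_shatters_nmem F Z x : {in F, forall A, x \notin A} -> shatters F Z -> x \notin Z.
Proof.
move=> xF /shatters_subset[A AF sZA].
by apply: contra (xF A AF); apply: subsetP.
Qed.

Lemma shatters_setU1 F G Z x :
  {in F, forall A, x \notin A} -> {in G, forall A, x \in A} ->
  shatters F Z -> shatters G Z -> shatters (F :|: G) (x |: Z).
Proof.
move=> xF xG /shattersP shFZ /shattersP shGZ; apply/shattersP => W sWxZ.
have sWZ : W :\ x \subset Z.
  by apply/subsetP => y /setD1P[yx /(subsetP sWxZ)/setU1P[/eqP|//]]; rewrite (negbTE yx).
have [xW|xNW] := boolP (x \in W).
  have [A AG AZ] := shGZ _ sWZ; exists A; first by rewrite inE AG orbT.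
  apply/setP => y; rewrite !inE; case: (eqVneq y x) => [->|yx]; first by rewrite xG.
  by move/setP/(_ y): AZ; rewrite !inE yx.
have [A AF AZ] := shFZ _ sWZ; exists A; first by rewrite inE AF.
apply/setP => y; rewrite !inE; case: (eqVneq y x) => [->|yx].
  by rewrite (negbTE (xF _ AF)) (negbTE xNW).
by move/setP/(_ y): AZ; rewrite !inE yx.
Qed.

Lemma card_shattered_sets_split F (x : V) (Fx := [set A : {set V} | x \in A]) :
  #|shattered_sets (F :&: Fx)| + #|shattered_sets (F :\: Fx)| <= #|shattered_sets F|.
Proof.
set F1 := F :&: Fx; set F0 := F :\: Fx.
have xF1 : {in F1, forall A, x \in A} by move=> A; rewrite !inE => /andP[].
have xF0 : {in F0, forall A, x \notin A} by move=> A; rewrite !inE => /andP[].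
set S0 := shattered_sets F0; set S1 := shattered_sets F1.
set S01 := [set x |: Z | Z in S0 :&: S1].
have cardS01 : #|S01| = #|S0 :&: S1|.
  apply: card_in_imset => Z Z'; rewrite !inE => /andP[_ /(notin_shatters_mem xF1) xZ].
  by move=> /andP[_ /(notin_shatters_mem xF1) xZ'] eqZ; rewrite -(setU1K xZ) -(setU1K xZ') eqZ.
have disjS01 : [disjoint S0 :|: S1 & S01].
  rewrite -setI_eq0; apply/eqP/setP => Z; rewrite !inE; apply/negP.
  case/andP => shZ /imsetP[Z' _ eqZ]; move: shZ; rewrite eqZ.
  have xxZ' := setU11 x Z'.
  by case/orP => [/(notin_shatters_nmem xF0)|/(notin_shatters_mem xF1)]; rewrite xxZ'.
have subS : S0 :|: S1 :|: S01 \subset shattered_sets F.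
  rewrite !subUset -andbA; apply/and3P; split; apply/subsetP => Z; rewrite !inE.
  - by apply: shattersS; apply: subsetDl.
  - by apply: shattersS; apply: subsetIl.
  case/imsetP => Z'; rewrite !inE => /andP[sh0 sh1] ->.
  by rewrite -(setID F Fx) setUC; apply: shatters_setU1.
apply: leq_trans (subset_leq_card subS).
have := (leq_card_setU (S0 :|: S1) S01).2; rewrite disjS01 => /eqP ->.
by rewrite cardS01 cardsUI addnC.
Qed.

Lemma pajor F : #|F| <= #|shattered_sets F|.
Proof.
elim: {F}_.+1 {-2}F (ltnSn #|F|) => // n IH F; rewrite ltnS => leFn.
have [le1|/card_gt1P[A [B [AF BF neAB]]]] := leqP #|F| 1.
  have [->|[A AF]] := set_0Vmem F; first by rewrite cards0.
  apply: leq_trans le1 _; rewrite card_gt0; apply/set0Pn; exists set0; rewrite inE.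
  by apply/shattersP => W; rewrite subset0 => /eqP ->; exists A; rewrite ?setI0.
wlog /subsetPn[x xA xNB] : A B AF BF neAB / ~~ (A \subset B).
  move=> gen; have [sAB|] := boolP (A \subset B); last exact: gen.
  apply: (gen B A) => //; first by rewrite eq_sym.
  by apply: contra neAB => sBA; rewrite eqEsubset sAB.
pose Fx := [set C : {set V} | x \in C].
have cardF : #|F :&: Fx| + #|F :\: Fx| = #|F| := cardsID _ F.
have pos1 : 0 < #|F :&: Fx| by apply/card_gt0P; exists A; rewrite !inE AF xA.
have pos0 : 0 < #|F :\: Fx| by apply/card_gt0P; exists B; rewrite !inE BF xNB.
apply: leq_trans (card_shattered_sets_split F x); rewrite -cardF.
by apply: leq_add; apply: IH; lia.
Qed.
End Pajor.

Section SmallSubsets.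
Variable V : finType.
Implicit Types (X Z : {set V}).

Definition subsets_le X (d : nat) := [set Z : {set V} | (Z \subset X) && (#|Z| <= d)].

Lemma sum_subsets_exp X a : \sum_(Z : {set V} | Z \subset X) a ^ (#|X| - #|Z|) = a.+1 ^ #|X|.
Proof.
rewrite (partition_big (fun Z : {set V} => inord #|Z| : 'I_#|X|.+1) xpredT) //=.
rewrite -[a.+1]addn1 expnDn; apply: eq_bigr => k _.
have cardZ Z : Z \subset X -> (inord #|Z| == k :> 'I_#|X|.+1) = (#|Z| == k).
  move=> sZX; rewrite -val_eqE /= inordK // ltnS; exact: subset_leq_card.
rewrite (eq_bigr (fun _ => a ^ (#|X| - k))); last by move=> Z /andP[sZX]; rewrite cardZ // => /eqP ->.
rewrite sum_nat_const exp1n muln1 -cards_draws; congr (_ * _); apply: eq_card => Z.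
by rewrite unfold_in inE /=; case sZX: (Z \subset X); rewrite //= cardZ.
Qed.

Lemma card_subsets_le X d a :
  0 < a -> #|subsets_le X d| * a ^ #|X| <= a ^ d * a.+1 ^ #|X|.
Proof.
move=> a_gt0; rewrite -sum_subsets_exp big_distrr /= -sum_nat_const.
apply: (@leq_trans (\sum_(Z : {set V} | (Z \subset X) && (#|Z| <= d)) a ^ d * a ^ (#|X| - #|Z|))).
  rewrite big_mkcond [leqRHS]big_mkcond /=; apply: leq_sum => Z _; rewrite inE.
  case/boolP: (_ && _) => // /andP[sZX leZd].
  rewrite -{1}(subnKC (subset_leq_card sZX)) expnD leq_mul2r leq_pexp2l ?orbT //.
by rewrite [leqRHS](bigID (fun Z : {set V} => #|Z| <= d)) /= leq_addr.
Qed.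
End SmallSubsets.

Lemma exp4_lt_exp5 d m : 0 < d -> 25 * d <= m -> 4 ^ (m + 4 * d) < 5 ^ m.
Proof.
move=> d_gt0 /subnKC <-; move: (m - 25 * d) => r.
have -> : 25 * d + r + 4 * d = 29 * d + r by lia.
rewrite (expnD 4) (expnD 5) (expnM 4 29 d) (expnM 5 25 d).
apply: (@leq_trans ((5 ^ 25) ^ d * 4 ^ r)).
  by rewrite ltn_pmul2r ?expn_gt0 // (ltn_exp2r _ _ d_gt0); lia.
rewrite leq_mul2l; apply/orP; right.
by case: r => [|r]; rewrite ?expn0 ?leq_exp2r.
Qed.

Lemma ltn_of_exp_bounds d m P : 0 < d ->
  3 ^ m <= 2 ^ m * (P * P) -> P * 15 ^ m <= 15 ^ d * 16 ^ m -> m < 25 * d.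
Proof.
move=> d_gt0 le3P lePexp; rewrite ltnNge; apply/negP => /(exp4_lt_exp5 d_gt0).
apply/negP; rewrite -leqNgt.
(* The hypotheses combine to 675^m <= 512^m 225^d; then 5 * 512 <= 4 * 675 and
   225 <= 4^4 give 5^m <= 4^(m + 4d). *)
have le675 : 675 ^ m <= 512 ^ m * 225 ^ d.
  rewrite (_ : 675 = 3 * (15 * 15)) // (_ : 512 = 2 * (16 * 16)) // (_ : 225 = 15 * 15) //.
  rewrite !expnMn; apply: leq_trans (leq_mul le3P (leqnn _)) _.
  rewrite -[leqLHS]mulnA -[leqRHS]mulnA leq_mul2l mulnACA [leqRHS]mulnACA.
  by apply/orP; right; apply: leq_mul; rewrite (mulnC (16 ^ m)).
have le5 : 5 ^ m * 512 ^ m <= 4 ^ (m + 4 * d) * 512 ^ m.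
  rewrite -expnMn (expnD 4) (expnM 4 4 d) mulnAC -mulnA.
  apply: leq_trans (_ : (4 * 675) ^ m <= _).
    by case: m {le3P lePexp le675} => [|m]; rewrite ?expn0 ?leq_exp2r.
  rewrite expnMn leq_mul2l; apply/orP; right; rewrite mulnC.
  apply: leq_trans le675 _; rewrite mulnC leq_mul2r; apply/orP; right.
  by rewrite (leq_exp2r _ _ d_gt0).
by rewrite -(leq_pmul2r (expn_gt0 512 m)).
Qed.

Section TriHypergraphs.
Variable V : finType.
Implicit Types (E : trihyp V) (e f : triedge V) (S W X Y Z : {set V}).

Definition redfree_traces E S :=
  [set W | [exists e in E, (S :&: Bpart e == W) && (S :&: (Bpart e :|: Rpart e) == W)]].

Lemma redfree_tracesP E S W :
  reflect (exists2 e, e \in E & S :&: Bpart e = W /\ S :&: (Bpart e :|: Rpart e) = W)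
          (W \in redfree_traces E S).
Proof.
rewrite inE; apply: (iffP existsP) => [[e /and3P[eE /eqP BW /eqP BRW]]|[e eE [BW BRW]]].
  by exists e.
by exists e; rewrite eE BW BRW !eqxx.
Qed.

Lemma redfree_traces_sub E S W : W \in redfree_traces E S -> W \subset S.
Proof. by case/redfree_tracesP => e _ [<- _]; apply: subsetIl. Qed.

Lemma shattered_redfree_traces E S Z : shatters (redfree_traces E S) Z -> shattered E Z.
Proof.
move=> shZ; have [A /redfree_traces_sub sAS sZA] := shatters_subset shZ.
have ZS : Z :&: S = Z by apply/setIidPl; apply: subset_trans sAS.
apply/forallP => W; apply/implyP => /(shattersP _ _ shZ)[A' /redfree_tracesP[e eE [BA BRA]] A'Z].
apply/existsP; exists e; rewrite eE /= -ZS -!setIA BA BRA setIC A'Z.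
by rewrite eqxx.
Qed.

Lemma shattered_leq_vcdim E Z : shattered E Z -> #|Z| <= vcdim E.
Proof. exact: (@leq_bigmax_cond _ (shattered E) (fun Y : {set V} => #|Y|)). Qed.

Lemma card_redfree_traces E S X d :
  S \subset X -> vcdim E <= d -> #|redfree_traces E S| <= #|subsets_le X d|.
Proof.
move=> sSX leEd; apply: leq_trans (pajor _) (subset_leq_card _).
apply/subsetP => Z; rewrite !inE => shZ.
have [A /redfree_traces_sub sAS sZA] := shatters_subset shZ.
rewrite (subset_trans sZA (subset_trans sAS sSX)) /=.
exact: leq_trans (shattered_leq_vcdim (shattered_redfree_traces shZ)) leEd.
Qed.

Lemma col_eqE (a b : col) :
  (a == b) = match a, b with Bc, Bc | Rc, Rc | Wc, Wc => true | _, _ => false end.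
Proof. by case: a; case: b; rewrite ?eqxx //; apply/eqP. Qed.

Lemma card_col : #|{: col}| = 3.
Proof.
rewrite -(card_ord 3); apply: bij_eq_card; exists col_decode; first exact: col_codeK.
by move=> [[|[|[|n]]] lt_n3] //; apply: val_inj; rewrite /= inordK.
Qed.

Lemma Bpart_cap e f : Bpart (triedge_cap e f) = Bpart e :&: Bpart f.
Proof.
apply/setP => x; rewrite /triedge_cap /mk_triedge !inE ffunE !inE.
by case: (e x); case: (f x); rewrite !col_eqE.
Qed.

Lemma BRpart_cap e f :
  Bpart (triedge_cap e f) :|: Rpart (triedge_cap e f)
  = (Bpart e :|: Rpart e) :&: (Bpart f :|: Rpart f).
Proof.
apply/setP => x; rewrite /triedge_cap /mk_triedge !inE !ffunE !inE.
by case: (e x); case: (f x); rewrite !col_eqE.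
Qed.

Lemma shattered_trihyp_cap_witness E1 E2 X Y :
  shattered (trihyp_cap E1 E2) X -> Y \subset X ->
  exists e1 e2, [/\ e1 \in E1, e2 \in E2, X :&: Bpart e1 :&: Bpart e2 = Y
                  & X :&: (Bpart e1 :|: Rpart e1) :&: (Bpart e2 :|: Rpart e2) = Y].
Proof.
move/forallP/(_ Y)/implyP => shY /shY/existsP[_ /andP[/imset2P[e1 e2 e1E e2E ->]]].
by case/andP => /eqP BY /eqP BRY; exists e1, e2; rewrite -!setIA -Bpart_cap -BRpart_cap.
Qed.

(* B_i and N_i stand for the black and the non-white part of e_i.  A point of X
   outside B ∪ R is white for e1 or for e2; S collects B and those white for e1. *)
Lemma trace_split (X B R B1 N1 B2 N2 : {set V}) :
  B1 \subset N1 -> B2 \subset N2 -> [disjoint B & R] ->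
  X :&: B1 :&: B2 = B :|: R -> X :&: N1 :&: N2 = B :|: R ->
  let S := B :|: (X :\: (R :|: N1)) in
  [/\ S \subset X, S :&: B1 = B, S :&: N1 = B,
      (X :\: S) :&: B2 = R & (X :\: S) :&: N2 = R].
Proof.
move=> /setIidPl/setP sB1 /setIidPl/setP sB2; rewrite -setI_eq0 => /eqP/setP dBR.
move=> /setP eB /setP eN S.
suff pw x : [/\ (x \in S) ==> (x \in X), (x \in S :&: B1) = (x \in B), (x \in S :&: N1) = (x \in B),
    (x \in (X :\: S) :&: B2) = (x \in R) & (x \in (X :\: S) :&: N2) = (x \in R)].
  split; try by apply/setP => x; case: (pw x).
  by apply/subsetP => x; case: (pw x) => /implyP.
move: (sB1 x) (sB2 x) (dBR x) (eB x) (eN x); rewrite !inE.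
by case: (x \in X); case: (x \in B); case: (x \in R); case: (x \in B1); case: (x \in N1);
  case: (x \in B2); case: (x \in N2).
Qed.

Definition colour_pairs X := [set (Bpart f, Rpart f) | f in pffun_on Wc X predT].

Lemma card_colour_pairs X : #|colour_pairs X| = 3 ^ #|X|.
Proof.
rewrite card_in_imset ?card_pffun_on ?cardT -?cardE ?card_col // => f g _ _ [/setP Bfg /setP Rfg].
apply/ffunP => x; move: (Bfg x) (Rfg x); rewrite !inE.
by case: (f x); case: (g x); rewrite !col_eqE.
Qed.

Lemma colour_pairs_cover E1 E2 X : shattered (trihyp_cap E1 E2) X ->
  colour_pairs X \subset
    \bigcup_(S in powerset X) setX (redfree_traces E1 S) (redfree_traces E2 (X :\: S)).
Proof.
move=> shX; apply/subsetP => _ /imsetP[f /pffun_onP[/subsetP suppf _] ->].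
have sBRX : Bpart f :|: Rpart f \subset X.
  by apply/subsetP => x xBR; apply: suppf; move: xBR; rewrite !inE; case: (f x); rewrite ?col_eqE.
have dBR : [disjoint Bpart f & Rpart f].
  by rewrite -setI_eq0; apply/eqP/setP => x; rewrite !inE; case: (f x); rewrite ?col_eqE.
have [e1 [e2 [e1E e2E eB eN]]] := shattered_trihyp_cap_witness shX sBRX.
have [sSX SB1 SN1 SB2 SN2] := trace_split (subsetUl _ _) (subsetUl _ _) dBR eB eN.
apply/bigcupP; eexists; first by rewrite powersetE; exact: sSX.
by rewrite inE /=; apply/andP; split; apply/redfree_tracesP; [exists e1|exists e2].
Qed.

Lemma leq_exp3_shattered_cap E1 E2 X d :
  shattered (trihyp_cap E1 E2) X -> vcdim E1 <= d -> vcdim E2 <= d ->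
  3 ^ #|X| <= 2 ^ #|X| * (#|subsets_le X d| * #|subsets_le X d|).
Proof.
move=> shX leE1 leE2; rewrite -card_colour_pairs.
apply: leq_trans (subset_leq_card (colour_pairs_cover shX)) _.
apply: leq_trans (leq_card_bigcup _ _) _.
rewrite -card_powerset -sum_nat_const; apply: leq_sum => S; rewrite powersetE => sSX.
by rewrite cardsX leq_mul // card_redfree_traces // subsetDl.
Qed.
End TriHypergraphs.

Theorem lemma4p5 : exists C : nat, 0 < C /\
  forall (V : finType) (E1 E2 : trihyp V) (d : nat),
    1 <= d -> vcdim E1 <= d -> vcdim E2 <= d ->
    vcdim (trihyp_cap E1 E2) <= C * d.
Proof.
exists 25; split => // V E1 E2 d d_gt0 leE1 leE2.
apply/bigmax_leqP => X shX; apply: ltnW.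
apply: (ltn_of_exp_bounds d_gt0 (leq_exp3_shattered_cap shX leE1 leE2)).
exact: card_subsets_le.
Qed.
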